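(* Let $n\ge0$, let $T\in\mathcal{T}_n$, and let $\pi=\varphi(T)$. Then $\operatorname{des}(\pi)=\operatorname{cdes}(T)$.
   Context: $\mathcal{T}_n$ is the set of plane (ordered) rooted trees with $n$ edges whose edges are labeled bijectively by $\{1,\dots,n\}$. For a non-root vertex $c$ whose edge to its parent has label $\ell$, define recursively $W(c)=\ell\,U\,\ell$, where $U$ is the concatenation of $W(c')$ over the children $c'$ of $c$ from left to right; $\varphi(T)$ is the concatenation of $W(c)$ over the children $c$ of the root from left to right (i.e. the sequence of edge labels recorded along a left-to-right depth-first walk, each edge recorded when traversed downward and upward). For a sequence $\pi_1\cdots\pi_r$, $i\in\{1,\dots,r\}$ is a descent if $\pi_i>\pi_{i+1}$ or $i=r$, and $\operatorname{des}(\pi)$ counts descents; the number of cyclic descents is $\operatorname{cdes}(\pi_1\cdots\pi_r)=|\{i\in\{1,\dots,r\}:\pi_i>\pi_{i+1}\}|$ with the convention $\pi_{r+1}=\pi_1$. For a vertex $v$ of $T$ whose children edges have labels $a_1,\dots,a_d$ from left to right: if $v$ is not the root and its parent edge has label $\ell$, $\operatorname{cdes}(v)=\operatorname{cdes}(\ell a_1\cdots a_d)$; if $v$ is the root, $\operatorname{cdes}(v)=\operatorname{des}(a_1\cdots a_d)$. Finally $\operatorname{cdes}(T)=\sum_v\operatorname{cdes}(v)$ over all vertices $v$ of $T$. *)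

From mathcomp Require Import all_boot.
Set Implicit Arguments. Unset Strict Implicit. Unset Printing Implicit Defensive.

(* A non-root vertex of a plane rooted tree, together with the label of the
   edge to its parent and the ordered (left-to-right) list of its children. *)
Inductive ltree : Type := LT (lab : nat) (children : seq ltree).

(* A plane rooted tree with labeled edges = ordered list of the root's children. *)
Definition ptree := seq ltree.

Definition lab (t : ltree) : nat := let: LT l _ := t in l.

Fixpoint labels (t : ltree) : seq nat :=
  let: LT l cs := t in l :: flatten (map labels cs).

Definition tree_labels (T : ptree) : seq nat := flatten (map labels T).

Definition in_Tn (n : nat) (T : ptree) : Prop := perm_eq (tree_labels T) (iota 1 n).

Fixpoint W (t : ltree) : seq nat :=
  let: LT l cs := t in l :: rcons (flatten (map W cs)) l.

Definition phi (T : ptree) : seq nat := flatten (map W T).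

(* des: positions i (0-based here) with s_i > s_{i+1} or i the last position *)
Definition des (s : seq nat) : nat :=
  \sum_(i < size s) ((i.+1 == size s) || (nth 0 s i.+1 < nth 0 s i)).

Definition cdes (s : seq nat) : nat :=
  \sum_(i < size s) (nth 0 s (i.+1 %% size s) < nth 0 s i).

(* sum of cdes(v) over all vertices v of the subtree rooted at the child c *)
Fixpoint cdes_sub (t : ltree) : nat :=
  let: LT l cs := t in cdes (l :: map lab cs) + sumn (map cdes_sub cs).

Definition cdes_tree (T : ptree) : nat := des (map lab T) + sumn (map cdes_sub T).

From mathcomp Require Import all_boot.

(** Proof idea: apart from the final position, the descents of a word are its
   adjacent descending pairs, counted by [path_des].  The word [W c = l U l]
   begins and ends with [l], and [U] concatenates the words [W c'] of the
   children, each beginning and ending with the label of [c'].  So the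
   descending pairs of [W c] are those inside the [W c'], those at the junctions
   of consecutive [W c'] (comparing consecutive child labels [a_i a_(i+1)]), and
   [l a_1], [a_d l]: the latter two kinds are the cyclic descents of
   [l a_1 ... a_d].  At the root the final position of [phi T] stands in for the
   final position of [a_1 ... a_d]. *)

Definition path_des (x : nat) (s : seq nat) : nat :=
  count id (pairmap (fun a b => b < a) x s).

Lemma path_des_cons x y s : path_des x (y :: s) = (y < x) + path_des y s.
Proof. by []. Qed.

Lemma path_des_cat x s1 s2 :
  path_des x (s1 ++ s2) = path_des x s1 + path_des (last x s1) s2.
Proof. by rewrite /path_des pairmap_cat count_cat. Qed.

Lemma path_des_rcons x s y :
  path_des x (rcons s y) = path_des x s + (y < last x s).
Proof. by rewrite -cats1 path_des_cat /path_des /= addn0. Qed.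

Lemma path_des_sum x s :
  path_des x s = \sum_(i < size s) (nth 0 (x :: s) i.+1 < nth 0 (x :: s) i).
Proof.
elim: s x => [|y s IHs] x; first by rewrite big_ord0.
by rewrite path_des_cons IHs big_ord_recl.
Qed.

Lemma des_cons x s : des (x :: s) = path_des x s + 1.
Proof.
rewrite /des big_ord_recr /= eqxx path_des_sum; congr (_ + _).
by apply: eq_bigr => i _; rewrite eqSS ltn_eqF.
Qed.

Lemma des_head s : des s = path_des (head 0 s) s + (0 < size s).
Proof.
case: s => [|x s]; first by rewrite /des big_ord0.
by rewrite des_cons path_des_cons ltnn.
Qed.

Lemma cdes_cons x s : cdes (x :: s) = path_des x s + (x < last x s).
Proof.
rewrite /cdes big_ord_recr /= modnn path_des_sum (last_nth 0); congr (_ + _).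
by apply: eq_bigr => i _; rewrite modn_small // ltnS ltn_ord.
Qed.

Lemma forest_ind (P : ltree -> Prop) (Q : ptree -> Prop) :
  Q [::] -> (forall t ts, P t -> Q ts -> Q (t :: ts)) ->
  (forall l ts, Q ts -> P (LT l ts)) ->
  forall ts, Q ts.
Proof.
move=> Qnil Qcons PLT.
have tree_ind : forall t, P t.
  refine (fix IH t := let: LT l ts := t in PLT l ts
    ((fix IHs ts : Q ts := match ts with
      | [::] => Qnil
      | t :: ts' => Qcons t ts' (IH t) (IHs ts')
      end) ts)).
by elim=> [|t ts IHts] //; apply: Qcons.
Qed.

Lemma last_W x t : last x (W t) = lab t.
Proof. by case: t => l ts; rewrite /= last_rcons. Qed.

Lemma last_phi x T : last x (phi T) = last x (map lab T).
Proof.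
elim: T x => [|t T IHT] x //=.
by rewrite last_cat last_W IHT.
Qed.

Lemma head_phi T : head 0 (phi T) = head 0 (map lab T).
Proof. by case: T => [|[]]. Qed.

Lemma size_phi_gt0 T : (0 < size (phi T)) = (0 < size T).
Proof. by case: T => [|[]]. Qed.

Lemma path_des_W_LT x l ts :
  (forall y, path_des y (phi ts) = path_des y (map lab ts) + sumn (map cdes_sub ts)) ->
  path_des x (W (LT l ts)) = (l < x) + cdes_sub (LT l ts).
Proof.
move=> path_des_children.
have -> : W (LT l ts) = l :: rcons (phi ts) l by [].
rewrite path_des_cons path_des_rcons path_des_children last_phi /= cdes_cons.
by rewrite addnAC -!addnA.
Qed.

Lemma path_des_phi x T :
  path_des x (phi T) = path_des x (map lab T) + sumn (map cdes_sub T).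
Proof.
move: T x; apply: (forest_ind
  (fun t => forall x, path_des x (W t) = (lab t < x) + cdes_sub t)).
- by [].
- move=> t T' path_des_W IHT x.
  have -> : phi (t :: T') = W t ++ phi T' by [].
  rewrite path_des_cat path_des_W last_W IHT /= path_des_cons.
  by rewrite -!addnA; congr (_ + _); rewrite addnCA.
- by move=> l ts IHts x; apply: path_des_W_LT.
Qed.

Theorem lemma2p1 (n : nat) (T : ptree) :
  in_Tn n T -> des (phi T) = cdes_tree T.
Proof.
(* The identity holds for arbitrary labels. *)
move=> _.
rewrite /cdes_tree !des_head head_phi path_des_phi size_phi_gt0 size_map.
by rewrite addnAC.
Qed.
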